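(* Let $P$ be a poset, let $e_1:P\to L_1$ and $e_2:P\to L_2$ be join-completions of $P$, and let $f:L_1\to L_2$ be a completely join-preserving map with $f\circ e_1=e_2$. Then $\mathcal{U}_{e_1}\subseteq\mathcal{U}_{e_2}$.
   Context: A join-completion of $P$ is an order embedding $e:P\to L$ into a complete lattice with every $x\in L$ equal to $\bigvee\{e(p):e(p)\le x\}$. For such $e$, $\Gamma_e$ is the standard closure operator on $P$ whose closed sets are the sets $e^{-1}(x^\downarrow)$, $x\in L$, and $\mathcal{U}_e=\{S\subseteq P:\bigvee S\text{ exists in }P\text{ and }\bigvee S\in\Gamma_e(S)\}$ (equivalently, $\bigvee S$ exists and $e(\bigvee S)=\bigvee e[S]$). *)

From HB Require Import structures.
From mathcomp Require Import all_boot all_order.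
From mathcomp Require Import boolp classical_sets.
Set Implicit Arguments. Unset Strict Implicit. Unset Printing Implicit Defensive.
Import Order.TTheory.
Local Open Scope classical_set_scope.
Local Open Scope order_scope.

Definition is_join {d} {T : porderType d} (S : set T) (x : T) : Prop :=
  (forall s, S s -> s <= x) /\ (forall y, (forall s, S s -> s <= y) -> x <= y).

Definition complete_lattice {d} (T : porderType d) : Prop :=
  forall S : set T, exists x, is_join S x.

Definition order_embedding {d d'} {P : porderType d} {L : porderType d'}
  (e : P -> L) : Prop := forall p q, (e p <= e q) <-> (p <= q).

Definition join_completion {d d'} {P : porderType d} {L : porderType d'}
  (e : P -> L) : Prop :=
  [/\ complete_lattice L, order_embedding e &
      forall x : L, is_join [set y | exists p, y = e p /\ e p <= x] x].

Definition complete_join_preserving {d d'} {L : porderType d} {M : porderType d'}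
  (f : L -> M) : Prop :=
  forall (S : set L) (x : L), is_join S x -> is_join (f @` S) (f x).

Definition Gamma_closed {d d'} {P : porderType d} {L : porderType d'}
  (e : P -> L) (A : set P) : Prop :=
  exists x : L, A = [set p | e p <= x].

Definition Gamma {d d'} {P : porderType d} {L : porderType d'}
  (e : P -> L) (S : set P) : set P :=
  [set p | forall A, Gamma_closed e A -> S `<=` A -> A p].

Definition U_e {d d'} {P : porderType d} {L : porderType d'}
  (e : P -> L) : set (set P) :=
  [set S | exists s, is_join S s /\ Gamma e S s].

(* An element s = \/S lies in Gamma_e(S) exactly when e s is the join of e[S]
   in L: the closed sets containing S are the down-sets e^{-1}(y) of the upper
   bounds y of e[S].  So S is in U_e1 iff e1 (\/S) = \/e1[S]; applying the
   join-preserving f and f \o e1 = e2 gives e2 (\/S) = \/e2[S]. *)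
From mathcomp Require Import all_boot all_order.
From mathcomp Require Import boolp classical_sets.
Set Implicit Arguments. Unset Strict Implicit. Unset Printing Implicit Defensive.
Import Order.TTheory.
Local Open Scope classical_set_scope.
Local Open Scope order_scope.

Section GammaJoin.
Context {dP dL : Order.disp_t} {P : porderType dP} {L : porderType dL}.
Variable e : P -> L.

Lemma GammaP (S : set P) (x : P) :
  Gamma e S x <-> forall y : L, (forall s, S s -> e s <= y) -> e x <= y.
Proof.
split=> [Gx y ubS | leS A [y ->] SA].
- by apply: (Gx [set p | e p <= y]) => //; exists y.
- by apply: leS => s /SA.
Qed.

Lemma Gamma_join_image (S : set P) (s : P) :
  order_embedding e -> is_join S s -> Gamma e S s <-> is_join (e @` S) (e s).
Proof.
move=> emb [ubs _]; rewrite GammaP; split=> [leS | [_ lub]].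
- split=> [_ [t St <-] | y ub]; first exact/emb/ubs.
  by apply: leS => t St; apply: ub; exists t.
- by move=> y ub; apply: lub => _ [t St <-]; apply: ub.
Qed.

Lemma U_eP (S : set P) : order_embedding e ->
  U_e e S <-> exists s, is_join S s /\ is_join (e @` S) (e s).
Proof.
move=> emb; split=> -[s [Js Gs]]; exists s; split=> //.
all: exact/(Gamma_join_image emb Js).
Qed.

End GammaJoin.

Theorem lemma5p9 {dP d1 d2 : Order.disp_t} (P : porderType dP)
  (L1 : porderType d1) (L2 : porderType d2)
  (e1 : P -> L1) (e2 : P -> L2) (f : L1 -> L2) :
  join_completion e1 -> join_completion e2 ->
  complete_join_preserving f -> (forall p, f (e1 p) = e2 p) ->
  U_e e1 `<=` U_e e2.
Proof.
move=> [_ emb1 _] [_ emb2 _] fjoin fe S /(U_eP _ emb1) [s [Js Je1s]].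
apply/(U_eP _ emb2); exists s; split=> //.
have fe1 : f \o e1 = e2 by apply: funext.
by have := fjoin _ _ Je1s; rewrite image_comp fe1 fe.
Qed.
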